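(* Let $G$ be a groupoid that is a generalised inflation of its subgroupoid $U$, and suppose that $G$ is a right modular groupoid and that $U$ is right cancellative (i.e. for $a,b,c \in U$, $ac = bc$ implies $a = b$). Then $G$ is an inflation of $U$.
   Context: A groupoid is a set with a binary operation, written $xy$ or $x\cdot y$. A groupoid $G$ is right modular if $xy\cdot z = zy\cdot x$ for all $x,y,z \in G$. A groupoid $G$ is an inflation of its subgroupoid $U$ if $G = \bigcup_{u\in U} G_u$ where (1) $u \in G_u$ for all $u\in U$, (2) $G_u \cap G_v = \emptyset$ for $u \ne v$, and (3) $x \in G_u$, $y\in G_v$ implies $xy = uv$. A groupoid $G$ is a generalised inflation of its subgroupoid $U$ if $G = \bigcup_{u\in U} G_u$ where (1) $u \in G_u$ for all $u \in U$, (2) $G_u\cap G_v=\emptyset$ for $u\neq v$, (3) for every $x \in G$ there are maps $\alpha_x, \beta_x : U \to U$ such that for all $x \in G_u$ and $y \in G_v$ ($u,v\in U$) one has $xy = \alpha_x(v)\cdot \beta_y(u)$ (product computed in $U$), and (4) for $u \in U$, $\alpha_u$ and $\beta_u$ are both the constant map on $U$ with value $u$. *)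

(* A groupoid is a carrier type G with a binary
   operation mul.
   A family of blocks (G_u)_{u in U} is given by Gb : G -> G -> Prop,
   Gb u x meaning x \in G_u (only indices u with U u matter). *)

Definition right_modular {G : Type} (mul : G -> G -> G) : Prop :=
  forall x y z : G, mul (mul x y) z = mul (mul z y) x.

Definition subgroupoid {G : Type} (mul : G -> G -> G) (U : G -> Prop) : Prop :=
  forall u v, U u -> U v -> U (mul u v).

Definition right_cancellative_on {G : Type} (mul : G -> G -> G) (U : G -> Prop) : Prop :=
  forall a b c, U a -> U b -> U c -> mul a c = mul b c -> a = b.

Definition block_decomposition {G : Type} (U : G -> Prop) (Gb : G -> G -> Prop) : Prop :=
  (forall u, U u -> Gb u u) /\
  (forall u v x, U u -> U v -> u <> v -> Gb u x -> Gb v x -> False) /\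
  (forall x, exists u, U u /\ Gb u x).

Definition inflation {G : Type} (mul : G -> G -> G) (U : G -> Prop) : Prop :=
  exists Gb : G -> G -> Prop,
    block_decomposition U Gb /\
    (forall u v x y, U u -> U v -> Gb u x -> Gb v y -> mul x y = mul u v).

(* alpha x, beta x : U -> U are represented as functions G -> G mapping U into U
   (their values outside U are irrelevant). *)
Definition generalised_inflation {G : Type} (mul : G -> G -> G) (U : G -> Prop) : Prop :=
  exists (Gb : G -> G -> Prop) (alpha beta : G -> G -> G),
    block_decomposition U Gb /\
    (forall x v, U v -> U (alpha x v)) /\
    (forall x v, U v -> U (beta x v)) /\
    (forall u v x y, U u -> U v -> Gb u x -> Gb v y ->
        mul x y = mul (alpha x v) (beta y u)) /\
    (forall u w, U u -> U w -> alpha u w = u /\ beta u w = u).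


(* Re-index the blocks: put x ∈ G_u into the block of β_x(u) ∈ U.  Right
   modularity and right cancellation in U show that left multiplication by an
   element w of U only sees β_x(u), i.e. w x = w β_x(u); applying this twice
   under a modular rearrangement gives x y = β_x(u) β_y(v). *)

Section GeneralisedInflation.

Variables (G : Type) (mul : G -> G -> G) (U : G -> Prop).
Variables (Gb : G -> G -> Prop) (alpha beta : G -> G -> G).

Hypothesis U_mul : subgroupoid mul U.
Hypothesis blocks : block_decomposition U Gb.
Hypothesis alpha_U : forall x v, U v -> U (alpha x v).
Hypothesis beta_U : forall x v, U v -> U (beta x v).
Hypothesis mul_blocks : forall u v x y, U u -> U v -> Gb u x -> Gb v y ->
  mul x y = mul (alpha x v) (beta y u).
Hypothesis alpha_beta_U : forall u w, U u -> U w -> alpha u w = u /\ beta u w = u.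
Hypothesis modular : right_modular mul.
Hypothesis cancel : right_cancellative_on mul U.

Lemma mul_U_block w u x : U w -> U u -> Gb u x -> mul w x = mul w (beta x w).
Proof.
  intros Hw Hu Hx. destruct blocks as [block_refl _].
  rewrite (mul_blocks w u w x Hw Hu (block_refl w Hw) Hx).
  now rewrite (proj1 (alpha_beta_U w u Hw Hu)).
Qed.

Lemma mul_U_block_in_U w u x : U w -> U u -> Gb u x -> U (mul w x).
Proof.
  intros Hw Hu Hx. rewrite (mul_U_block w u x Hw Hu Hx). apply U_mul; auto.
Qed.

Lemma mul_U_block_beta w u x : U w -> U u -> Gb u x -> mul w x = mul w (beta x u).
Proof.
  intros Hw Hu Hx.
  (* (w x) u = (u x) w = (u β_x(u)) w = (w β_x(u)) u, then cancel u *)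
  apply (cancel _ _ u); auto.
  - exact (mul_U_block_in_U w u x Hw Hu Hx).
  - rewrite modular, (mul_U_block u u x Hu Hu Hx), modular. reflexivity.
Qed.

Lemma mul_blocks_in_U u v x y : U u -> U v -> Gb u x -> Gb v y -> U (mul x y).
Proof.
  intros Hu Hv Hx Hy. rewrite (mul_blocks u v x y Hu Hv Hx Hy). apply U_mul; auto.
Qed.

Lemma mul_blocks_beta u v x y : U u -> U v -> Gb u x -> Gb v y ->
  mul x y = mul (beta x u) (beta y v).
Proof.
  intros Hu Hv Hx Hy.
  (* (x y) u = (u y) x = (u β_y(v)) x = (u β_y(v)) β_x(u) = (β_x(u) β_y(v)) u *)
  apply (cancel _ _ u); auto.
  - exact (mul_blocks_in_U u v x y Hu Hv Hx Hy).
  - rewrite modular, (mul_U_block_beta u v y Hu Hv Hy).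
    rewrite (mul_U_block_beta (mul u (beta y v)) u x (U_mul _ _ Hu (beta_U y v Hv)) Hu Hx).
    apply modular.
Qed.

Definition beta_block (e x : G) : Prop := exists u, U u /\ Gb u x /\ beta x u = e.

Lemma beta_block_decomposition : block_decomposition U beta_block.
Proof.
  destruct blocks as [block_refl [blocks_disjoint blocks_cover]].
  split; [|split].
  - intros u Hu. exists u. repeat split; auto. apply (alpha_beta_U u u Hu Hu).
  - intros e1 e2 x _ _ Hne [u1 [Hu1 [Hx1 E1]]] [u2 [Hu2 [Hx2 E2]]].
    apply (blocks_disjoint u1 u2 x Hu1 Hu2); auto.
    intros ->. congruence.
  - intros x. destruct (blocks_cover x) as [u [Hu Hx]].
    exists (beta x u). split; [apply beta_U; exact Hu|]. exists u. auto.
Qed.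

Lemma mul_beta_block e1 e2 x y : U e1 -> U e2 ->
  beta_block e1 x -> beta_block e2 y -> mul x y = mul e1 e2.
Proof.
  intros _ _ [u [Hu [Hx <-]]] [v [Hv [Hy <-]]].
  exact (mul_blocks_beta u v x y Hu Hv Hx Hy).
Qed.

End GeneralisedInflation.

Theorem theorem1 (G : Type) (mul : G -> G -> G) (U : G -> Prop) :
  subgroupoid mul U ->
  generalised_inflation mul U ->
  right_modular mul ->
  right_cancellative_on mul U ->
  inflation mul U.
Proof.
  intros U_mul [Gb [alpha [beta [blocks [alpha_U [beta_U [mul_blocks alpha_beta_U]]]]]]]
    modular cancel.
  exists (beta_block G U Gb beta). split.
  - apply beta_block_decomposition with alpha; assumption.
  - apply mul_beta_block with alpha; assumption.
Qed.
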